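(* Let $r\ge1$ and $G\subset\mathbb{Z}_2^r$ a subgroup with $1^r\in G$, $S_G$ as below. Then $\dim_{\mathbb{C}}S_G=2^{2r-\dim G}P_G(\tfrac12)$, where $P_G(t)=\sum_{k=0}^r N_k(G)t^k$ and $N_k(G)=\#\{g\in G: g \text{ has exactly } k \text{ nonzero coordinates}\}$ ($\dim G$ is the $\mathbb{Z}_2$-dimension).
   Context: For $c\in\mathbb{Z}_2^{r+r}$, $|c|_l,|c|_r$ are the numbers of ones among the first/last $r$ coordinates, $|c|=|c|_l-|c|_r$ (componentwise products of codewords), $d_\perp=1^{2r}+d$, $\mathbb{Z}_2^d=\{\alpha:d\alpha=\alpha\}$, $A^\perp=\{\beta:|\beta a|\in2\mathbb{Z}\ \forall a\in A\}$. $\Delta(g)=(g,g)$; $D_G=\Delta G$, $C_G=D_G^\perp$. $C^{\rm even}_{r,r}=\{\alpha:|\alpha|\in2\mathbb{Z}\}$ with ordered basis $(v_1,\dots,v_{2r-1})=(\Delta e_1,\dots,\Delta e_r,\tilde e_1-\tilde e_2,\dots,\tilde e_{r-1}-\tilde e_r)$, $\tilde e_i=(e_i,0)$; $\varepsilon$ bimultiplicative to $\{\pm1\}$ with $\varepsilon(v_i,v_i)=(-1)^{|v_i|/2}$, $\varepsilon(v_i,v_j)=1$ ($i<j$), $(-1)^{|v_iv_j|}$ ($i>j$). $\mathbb{C}[\hat C_G]$: basis $e_\alpha$ ($\alpha\in C_G$), $e_\alpha e_\beta=\varepsilon(\alpha,\beta)e_{\alpha+\beta}$. For $d\in\Delta\mathbb{Z}_2^r$,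 $\Delta^d=\mathbb{Z}_2^d\cap\Delta\mathbb{Z}_2^r$, with $\{e_\gamma\}_{\gamma\in\Delta^d}$ spanning a copy of the group algebra $\mathbb{C}[\Delta^d]$. For $d\in D_G$, $A_G(d)=\mathbb{C}[\hat C_G]\otimes_{\mathbb{C}[\Delta^d]}\mathbb{C}t_d$ (trivial module) and $S_G=\bigoplus_{d\in D_G}A_G(d)$. *)

From HB Require Import structures.
From mathcomp Require Import all_boot all_order all_algebra all_field.
Set Implicit Arguments. Unset Strict Implicit. Unset Printing Implicit Defensive.
Import Order.TTheory GRing.Theory Num.Theory.
Local Open Scope ring_scope.

(* Z_2^r as row vectors over F_2; Z_2^{r+r} as 'rV['F_2]_(r+r),
   first r coordinates = "left", last r = "right". *)
Notation bv n := 'rV['F_2]_n.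

Section Defs.
Variable r : nat.

Definition Delta (g : bv r) : bv (r + r) := row_mx g g.

Definition cmul n (a b : bv n) : bv n := \row_k (a 0 k * b 0 k).

Definition wtl (c : bv (r + r)) : nat := #|[set k : 'I_r | lsubmx c 0 k != 0]|.
Definition wtr (c : bv (r + r)) : nat := #|[set k : 'I_r | rsubmx c 0 k != 0]|.
Definition wt (c : bv (r + r)) : int := (wtl c)%:Z - (wtr c)%:Z.

Definition perp (A : {set bv (r + r)}) : {set bv (r + r)} :=
  [set b | [forall a in A, (2 %| wt (cmul b a))%Z]].

(* standard unit vector e_i of Z_2^r (0-indexed; zero if i >= r) *)
Definition eunit (i : nat) : bv r := \row_(k < r) ((k : nat) == i)%:R.
Definition etil (i : nat) : bv (r + r) := row_mx (eunit i) 0.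

(* ordered basis (v_1,...,v_{2r-1}) of C^even_{r,r}, 0-indexed:
   v_i = Delta e_i for i < r, v_{r+j} = etil_j - etil_{j+1} for j < r-1 *)
Definition vbasis_fun (i : nat) : bv (r + r) :=
  if (i < r)%N then Delta (eunit i)
  else etil (i - r)%N - etil (i - r)%N.+1.

Definition vbasis : ((r + r).-1).-tuple (bv (r + r)) :=
  [tuple vbasis_fun i | i < (r + r).-1].

Definition sgn (n : nat) : algC := (-1) ^+ n.

Definition eps_basis (i j : 'I_((r + r).-1)) : algC :=
  if i == j then sgn `|(wt (vbasis`_i) %/ 2)%Z|%N
  else if (i < j)%N then 1
  else sgn `|wt (cmul vbasis`_i vbasis`_j)|%N.

(* the bimultiplicative extension of eps_basis, via coordinates in the
   basis vbasis *)
Definition eps (a b : bv (r + r)) : algC :=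
  \prod_(i < (r + r).-1) \prod_(j < (r + r).-1)
     (if (coord vbasis i a != 0) && (coord vbasis j b != 0)
      then eps_basis i j else 1).

(* ambient space of C-valued functions on Z_2^{r+r}; e_a = indicator *)
Definition FV := {ffun bv (r + r) -> algC^o}.
Definition ebas (a : bv (r + r)) : FV := [ffun x => (x == a)%:R].

(* twisted convolution product: e_a e_b = eps(a,b) e_{a+b} *)
Definition tmul (f g : FV) : FV :=
  [ffun c => \sum_(a : bv (r + r)) \sum_(b : bv (r + r))
               (if a + b == c then eps a b * f a * g b else 0)].

Variable G : {vspace bv r}.

Definition DG : {set bv (r + r)} := [set Delta g | g : bv r & g \in G].
Definition CG : {set bv (r + r)} := perp DG.

(* underlying vector space of C[hat C_G] *)
Definition CGalg : {vspace FV} := <<[seq ebas a | a <- enum CG]>>%VS.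

(* Delta^d = Z_2^d cap Delta Z_2^r *)
Definition Deltad (d : bv (r + r)) : {set bv (r + r)} :=
  [set c | (cmul d c == c) && (c \in [set Delta h | h : bv r])].

(* A_G(d) = C[hat C_G] (x)_{C[Delta^d]} C t_d is the quotient of C[hat C_G]
   by the span of x*a - x*(counit a), x in C[hat C_G], a in C[Delta^d];
   by bilinearity this is spanned by e_a e_g - e_a. *)
Definition relsp (d : bv (r + r)) : {vspace FV} :=
  <<[seq tmul (ebas a) (ebas g) - ebas a | a <- enum CG, g <- enum (Deltad d)]>>%VS.

Definition dimA (d : bv (r + r)) : nat := (\dim CGalg - \dim (relsp d))%N.

(* S_G = (+)_{d in D_G} A_G(d) *)
Definition dimS : nat := \sum_(d in DG) dimA d.

Definition Nk (k : nat) : nat :=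
  #|[set g : bv r | (g \in G) && (#|[set i | g 0 i != 0]| == k)]|.

Definition PG_half : rat := \sum_(k < r.+1) (Nk k)%:R / 2%:R ^+ k.

End Defs.

From Pilot Require Import Defs.
From HB Require Import structures.
From mathcomp Require Import all_boot all_order all_algebra all_field.
From mathcomp Require Import zify.
Import GRing.Theory Num.Theory.
Local Open Scope ring_scope.
Set Implicit Arguments. Unset Strict Implicit. Unset Printing Implicit Defensive.

(* For d = Delta g, the elements of Delta^d are the Delta h with supp h inside
   supp g, i.e. h in a group H of order 2^|g|. The relations e_a e_(Delta h) = e_a
   glue the basis vectors of C[hat C_G] along the cosets a + Delta H up to sign;
   since eps is bimultiplicative, +-1-valued and trivial on Delta Z_2^r, no coset
   collapses, so dim A_G(Delta g) = |C_G| / 2^|g|. Next, b lies in C_G iff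
   b_l + b_r lies in the dual code of G, whence |C_G| = 2^r |G^perp| = 2^(2r - dim G)
   by a character-sum count of G^perp. Summing over g in G gives the weight
   enumerator 2^(2r - dim G) P_G(1/2). *)

Lemma F2_cases (x : 'F_2) : x = 0 \/ x = 1.
Proof. by case: x => [[|[|//]] ?]; [left | right]; apply/val_inj. Qed.

Lemma F2_nz (x : 'F_2) : x != 0 -> x = 1.
Proof. by case: (F2_cases x) => ->; rewrite ?eqxx. Qed.

Lemma F2_natr (n : nat) : n%:R = (odd n)%:R :> 'F_2.
Proof.
by rewrite -[in LHS](odd_double_half n) natrD -mul2n natrM pchar_Fp_0 ?mul0r ?addr0.
Qed.

Lemma bv_addrr n (x : bv n) : x + x = 0.
Proof. by apply/rowP => k; rewrite !mxE addrr_pchar2 ?pchar_Fp. Qed.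

Lemma scalar_sum (K : fieldType) (vT : lmodType K) (phi : vT -> K) :
  scalar phi -> forall I (s : seq I) (a : I -> K) (u : I -> vT),
  phi (\sum_(i <- s) a i *: u i) = \sum_(i <- s) a i * phi (u i).
Proof.
move=> phiL I s a u.
have phi0 : phi 0 = 0.
  by have /eqP := phiL 1 0 0; rewrite scale1r addr0 mul1r -subr_eq subrr eq_sym => /eqP.
have phiD v w : phi (v + w) = phi v + phi w by have := phiL 1 v w; rewrite scale1r mul1r.
rewrite (big_morph phi phiD phi0); apply: eq_bigr => i _.
by have := phiL (a i) (u i) 0; rewrite !addr0 phi0 addr0.
Qed.

Lemma scalar_span_eq0 (K : fieldType) (vT : vectType K) (s : seq vT) (phi : vT -> K) :
  scalar phi -> {in s, forall v, phi v = 0} -> {in <<s>>%VS, forall v, phi v = 0}.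
Proof.
move=> phiL phi_s v /(coord_span (X := in_tuple s)) ->; rewrite scalar_sum //.
by apply: big1 => i _; rewrite phi_s ?mulr0 // mem_nth.
Qed.

Lemma coord_dual (K : fieldType) (vT : vectType K) n (X : n.-tuple vT)
    (phi : 'I_n -> vT -> K) :
  (forall i, scalar (phi i)) -> (forall i j : 'I_n, phi i X`_j = (i == j)%:R) ->
  {in <<X>>%VS, forall v i, coord X i v = phi i v}.
Proof.
move=> phiL phiX v /coord_span vE i; rewrite [in RHS]vE scalar_sum //.
rewrite (bigD1 i) //= phiX eqxx mulr1 big1 ?addr0 // => j /negPf ji.
by rewrite phiX eq_sym ji mulr0.
Qed.

Section Delta.
Variable r : nat.
Implicit Types x y : bv r.

Lemma Delta_is_linear : linear (@Delta r).
Proof. by move=> a x y; rewrite /Delta scale_row_mx add_row_mx. Qed.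
HB.instance Definition _ :=
  GRing.isLinear.Build 'F_2 (bv r) (bv (r + r)) *:%R (@Delta r) Delta_is_linear.

Lemma rsubmx_Delta x : rsubmx (Delta x) = x.
Proof. exact: row_mxKr. Qed.

Lemma Delta_inj : injective (@Delta r).
Proof. by move=> x y /(congr1 rsubmx); rewrite !rsubmx_Delta. Qed.

Lemma wt_Delta x : wt (Delta x) = 0.
Proof. by rewrite /wt /wtl /wtr /Delta row_mxKl row_mxKr subrr. Qed.

Lemma cmul_Delta x y : cmul (Delta x) (Delta y) = Delta (cmul x y).
Proof.
apply/rowP => c; rewrite -(splitK c); case: (split c) => l /=;
by rewrite /cmul /Delta mxE ?(row_mxEl, row_mxEr) mxE.
Qed.

Definition lrsum (c : bv (r + r)) : bv r := lsubmx c + rsubmx c.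

Lemma lrsum_is_linear : linear lrsum.
Proof. by move=> a x y; rewrite /lrsum !linearP scalerDr addrACA. Qed.
HB.instance Definition _ :=
  GRing.isLinear.Build 'F_2 (bv (r + r)) (bv r) *:%R lrsum lrsum_is_linear.

Lemma lrsum_Delta x : lrsum (Delta x) = 0.
Proof. by rewrite /lrsum /Delta row_mxKl row_mxKr bv_addrr. Qed.

Lemma lrsum_etil a : lrsum (etil r a) = eunit r a.
Proof. by rewrite /lrsum /etil row_mxKl row_mxKr addr0. Qed.

End Delta.

Section VBasis.
Variable r : nat.
Local Notation vb := (Defs.vbasis r).

Definition psum (P : pred nat) (x : bv r) : 'F_2 := \sum_(l < r | P l) x 0 l.

Lemma psum_is_scalar P : scalar (psum P).
Proof.
by move=> a x y; rewrite /psum mulr_sumr -big_split; apply: eq_bigr => l _; rewrite !mxE.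
Qed.
HB.instance Definition _ P :=
  GRing.isLinear.Build 'F_2 (bv r) 'F_2 *%R (psum P) (psum_is_scalar P).

Lemma psum_eunit P a : psum P (eunit r a) = ((a < r)%N && P a)%:R.
Proof.
rewrite /psum (eq_bigr (fun l : 'I_r => ((l : nat) == a)%:R)) => [|l _]; last first.
  by rewrite mxE.
case: ltnP => [ar | ra] /=; last first.
  by apply: big1 => l _; rewrite ltn_eqF // (leq_trans (ltn_ord l)).
case Pa: (P a).
  rewrite (bigD1 (Ordinal ar)) //= eqxx big1 ?addr0 // => l /andP [_ /negPf].
  by rewrite -val_eqE /= => ->.
by apply: big1 => l Pl; case: eqP => // la; rewrite -la Pl in Pa.
Qed.

(* Coordinate functionals dual to [vbasis]: for [i < r] read the right coordinate
   [i]; for [i = r + m] sum [lrsum c] over the positions [<= m], which kills every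
   [Delta e_j] and telescopes on [etil m' - etil m'.+1] to [m' == m]. *)
Definition vdual (i : 'I_(r + r).-1) (c : bv (r + r)) : 'F_2 :=
  if (i < r)%N then psum (pred1 (i : nat)) (rsubmx c)
  else psum (fun l => l <= i - r)%N (lrsum c).

Lemma vdual_is_scalar i : scalar (vdual i).
Proof. by move=> a x y; rewrite /vdual; case: ifP => _; rewrite !linearP. Qed.

Lemma vdual_vbasis (i j : 'I_(r + r).-1) : vdual i vb`_j = (i == j)%:R.
Proof.
rewrite nth_mktuple /vbasis_fun /vdual.
case: (ltnP j r) => jr; case: (ltnP i r) => ir.
- by rewrite rsubmx_Delta psum_eunit jr -val_eqE eq_sym.
- by rewrite lrsum_Delta raddf0 -val_eqE gtn_eqF // (leq_trans jr).
- by rewrite /etil linearB /= !row_mxKr subrr raddf0 -val_eqE ltn_eqF // (leq_trans ir).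
have := ltn_ord i; have := ltn_ord j => j2r i2r.
rewrite linearB /= !lrsum_etil linearB /= !psum_eunit /=.
have aj : ((j - r).+1 < r)%N by lia.
rewrite aj ltnW //= -val_eqE /=.
rewrite (_ : (i == j :> nat) = (j - r == i - r)%N); last by apply/eqP/eqP; lia.
by case: ltngtP; rewrite ?subrr ?subr0.
Qed.

Lemma Delta_in_vbasis_span x : Delta x \in <<vb>>%VS.
Proof.
rewrite [x]row_sum_delta linear_sum; apply: rpred_sum => l _.
rewrite linearZ /=; apply/rpredZ/memv_span.
have lr : (l < (r + r).-1)%N by have := ltn_ord l; lia.
have -> : Delta (delta_mx 0 l) = vb`_(Ordinal lr).
  rewrite nth_mktuple /vbasis_fun /= ltn_ord; congr Delta.
  by apply/rowP => k; rewrite !mxE.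
by apply: mem_nth; rewrite size_tuple.
Qed.

Lemma coord_vbasis_Delta (i : 'I_(r + r).-1) (x : bv r) :
  (r <= i)%N -> coord vb i (Delta x) = 0.
Proof.
move=> ri; rewrite (coord_dual vdual_is_scalar vdual_vbasis) ?Delta_in_vbasis_span //.
by rewrite /vdual ltnNge ri lrsum_Delta raddf0.
Qed.

End VBasis.

Section Eps.
Variable r : nat.
Implicit Types (a b : bv (r + r)) (x y : bv r).
Local Notation vb := (Defs.vbasis r).

Lemma sgn_sqr n : sgn n * sgn n = 1.
Proof. by rewrite /sgn -exprD -signr_odd addnn odd_double. Qed.

Lemma eps_basis_sqr (i j : 'I_(r + r).-1) : eps_basis i j * eps_basis i j = 1.
Proof.
rewrite /eps_basis; case: eqP => _; first exact: sgn_sqr.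
by case: ifP => _; rewrite ?mulr1 ?sgn_sqr.
Qed.

Lemma eps_addl a a' b : eps (a + a') b = eps a b * eps a' b.
Proof.
rewrite /eps -big_split; apply: eq_bigr => i _; rewrite -big_split.
apply: eq_bigr => j _; rewrite linearD /=.
case: (F2_cases (coord vb i a)) => ->; case: (F2_cases (coord vb i a')) => ->;
case: (F2_cases (coord vb j b)) => -> //=; rewrite ?mulr1 ?mul1r //.
by rewrite eps_basis_sqr.
Qed.

Lemma eps_addr a b b' : eps a (b + b') = eps a b * eps a b'.
Proof.
rewrite /eps -big_split; apply: eq_bigr => i _; rewrite -big_split.
apply: eq_bigr => j _; rewrite linearD /=.
case: (F2_cases (coord vb j b)) => ->; case: (F2_cases (coord vb j b')) => ->;
case: (F2_cases (coord vb i a)) => -> //=; rewrite ?mulr1 ?mul1r //.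
by rewrite eps_basis_sqr.
Qed.

Lemma eps0l b : eps 0 b = 1.
Proof. by apply: big1 => i _; apply: big1 => j _; rewrite linear0 eqxx. Qed.

Lemma eps0r a : eps a 0 = 1.
Proof. by apply: big1 => i _; apply: big1 => j _; rewrite linear0 eqxx andbF. Qed.

Lemma eps_sqr a b : eps a b * eps a b = 1.
Proof. by rewrite -eps_addl bv_addrr eps0l. Qed.

Lemma eps_basis_Delta (i j : 'I_(r + r).-1) :
  (i < r)%N -> (j < r)%N -> eps_basis i j = 1.
Proof.
move=> ir jr; rewrite /eps_basis !nth_mktuple /vbasis_fun ir jr.
case: eqP => _; first by rewrite wt_Delta.
by case: ifP => // _; rewrite cmul_Delta wt_Delta.
Qed.

Lemma eps_Delta x y : eps (Delta x) (Delta y) = 1.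
Proof.
apply: big1 => i _; apply: big1 => j _.
case: (ltnP i r) => ir; last by rewrite coord_vbasis_Delta.
case: (ltnP j r) => jr; last by rewrite (coord_vbasis_Delta _ jr) eqxx andbF.
by rewrite eps_basis_Delta ?if_same.
Qed.

End Eps.

Definition hweight n (x : bv n) : nat := #|[set k | x 0 k != 0]|.

Lemma natr_hweight n (x : bv n) : (hweight x)%:R = \sum_k x 0 k :> 'F_2.
Proof.
rewrite /hweight -sum1dep_card natr_sum big_mkcond /=; apply: eq_bigr => k _.
by case: (F2_cases (x 0 k)) => ->.
Qed.

Lemma hweight_lt n (x : bv n) : (hweight x < n.+1)%N.
Proof. by rewrite ltnS /hweight -[leqRHS]card_ord max_card. Qed.

Lemma sum_hweight (R : nmodType) n (G : {vspace bv n}) (F : nat -> R) :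
  \sum_(g in G) F (hweight g) = \sum_(k < n.+1) F k *+ Nk G k.
Proof.
rewrite (partition_big (fun g => Ordinal (hweight_lt g)) predT) //=.
apply: eq_bigr => k _; rewrite -sumr_const; apply: eq_big => [g | g /andP [_ /eqP <-]] //.
by rewrite inE -val_eqE.
Qed.

Definition dot n (x y : bv n) : 'F_2 := \sum_k x 0 k * y 0 k.

Lemma dotC n (x y : bv n) : dot x y = dot y x.
Proof. by apply: eq_bigr => k _; rewrite mulrC. Qed.

Lemma dotDr n (x y z : bv n) : dot x (y + z) = dot x y + dot x z.
Proof. by rewrite /dot -big_split; apply: eq_bigr => k _; rewrite mxE mulrDr. Qed.

Section Perp.
Variable r : nat.

Lemma wt_even (c : bv (r + r)) : (2 %| wt c)%Z = (\sum_k c 0 k == 0).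
Proof.
rewrite /wt -eqz_mod_dvd !modz_nat !modn2 big_split_ord /=.
rewrite (_ : wtl c = hweight (lsubmx c)) // (_ : wtr c = hweight (rsubmx c)) //.
have sumE (y : bv r) : \sum_i y 0 i = (odd (hweight y))%:R.
  by rewrite -F2_natr natr_hweight.
have El : \sum_i c 0 (lshift r i) = \sum_i lsubmx c 0 i.
  by apply: eq_bigr => i _; rewrite mxE.
have Er : \sum_i c 0 (rshift r i) = \sum_i rsubmx c 0 i.
  by apply: eq_bigr => i _; rewrite mxE.
by rewrite El Er !sumE; do 2!case: odd.
Qed.

Lemma perp_dot (A : {set bv (r + r)}) b : (b \in perp A) = [forall a in A, dot b a == 0].
Proof.
rewrite inE; apply: eq_forallb => a; rewrite wt_even /dot.
by congr (_ ==> (_ == _)); apply: eq_bigr => k _; rewrite mxE.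
Qed.

End Perp.

Definition F2sign (y : 'F_2) : int := (-1) ^+ (y != 0).

Lemma F2signD y z : F2sign (y + z) = F2sign y * F2sign z.
Proof.
by rewrite /F2sign -signr_addb; case: (F2_cases y) => ->; case: (F2_cases z) => ->.
Qed.

Lemma sum_sign_reversing (T : finType) (P : pred T) (F : T -> int) (h : T -> T) :
  injective h -> (forall x, P (h x) = P x) -> (forall x, F (h x) = - F x) ->
  \sum_(x | P x) F x = 0.
Proof.
move=> h_inj Ph Fh.
have : \sum_(x | P x) F x = - \sum_(x | P x) F x.
  rewrite {1}(reindex_inj h_inj) -sumrN; apply: eq_big => x; [exact: Ph | by rewrite Fh].
by move/eqP; rewrite -addr_eq0 -mulr2n mulrn_eq0 => /eqP.
Qed.

Section DualCode.
Variables (n : nat) (G : {vspace bv n}).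

Definition dual_code : {set bv n} := [set x | [forall g in G, dot x g == 0]].

Lemma sum_sign_dot x :
  \sum_(g in G) F2sign (dot x g) = if x \in dual_code then #|G|%:Z else 0.
Proof.
rewrite inE; case: ifPn => [|/forall_inPn [g0 g0G /negPf x_g0]].
  move=> /forall_inP x_perp; rewrite -natz -sumr_const; apply: eq_bigr => g gG.
  by rewrite /F2sign (eqP (x_perp g gG)) eqxx.
apply: (sum_sign_reversing (h := +%R^~ g0)) => [|g|g]; first exact: addIr.
  by rewrite /= rpredDr.
by rewrite dotDr F2signD /F2sign x_g0 mulrN1.
Qed.

End DualCode.

Lemma dual_code_fullv n : dual_code (fullv : {vspace bv n}) = [set 0].
Proof.
apply/setP => x; rewrite !inE; apply/forall_inP/eqP => [x_perp | -> g _]; last first.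
  by rewrite /dot big1 // => k _; rewrite mxE mul0r.
apply/rowP => c; have /eqP := x_perp (delta_mx 0 c) (memvf _).
rewrite /dot (bigD1 c) //= mxE !eqxx mulr1 big1 ?addr0 ?mxE // => k /negPf kc.
by rewrite mxE kc mulr0.
Qed.

Lemma card_dual_code n (G : {vspace bv n}) : (#|dual_code G| * #|G|)%N = (2 ^ n)%N.
Proof.
have sum_all g : \sum_(x : bv n) F2sign (dot x g) = if g == 0 then (2 ^ n)%:Z else 0.
  rewrite (eq_bigl (mem (fullv : {vspace bv n}))) => [|x]; last by rewrite /= memvf.
  under eq_bigr do rewrite dotC.
  by rewrite sum_sign_dot dual_code_fullv inE card_vspacef card_mx card_Fp // mul1n.
have : \sum_(x : bv n) \sum_(g in G) F2sign (dot x g)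
       = \sum_(g in G) \sum_(x : bv n) F2sign (dot x g) by rewrite exchange_big.
under eq_bigr do rewrite sum_sign_dot.
under [in RHS]eq_bigr do rewrite sum_all.
rewrite -big_mkcond sumr_const (bigD1 0) ?mem0v //= eqxx.
rewrite big1 => [|g /andP [_ /negPf ->]] //.
rewrite addr0 => /eqP.
by rewrite -natz -mulrnA natz eqz_nat mulnC => /eqP.
Qed.

Section CG.
Variables (r : nat) (G : {vspace bv r}).

Lemma dot_Delta (b : bv (r + r)) (g : bv r) : dot b (Delta g) = dot (lrsum b) g.
Proof.
rewrite /dot big_split_ord /= -big_split; apply: eq_bigr => k _.
by rewrite /Delta row_mxEl row_mxEr !mxE mulrDl.
Qed.

Lemma CG_lrsum b : (b \in CG G) = (lrsum b \in dual_code G).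
Proof.
rewrite perp_dot inE; apply/forall_inP/forall_inP => [b_perp g gG | b_perp c /imsetP [g]].
  by rewrite -dot_Delta b_perp //; apply/imsetP; exists g; rewrite ?inE.
by rewrite inE => gG ->; rewrite dot_Delta b_perp.
Qed.

Lemma CG_addDelta a x : (a + Delta x \in CG G) = (a \in CG G).
Proof. by rewrite !CG_lrsum linearD /= lrsum_Delta addr0. Qed.

Lemma card_CG : #|CG G| = (2 ^ (2 * r - \dim G))%N.
Proof.
pose f (b : bv (r + r)) := (lrsum b, rsubmx b).
have f_inj : injective f.
  move=> b1 b2 [/eqP]; rewrite /lrsum => + E2; rewrite E2 (inj_eq (addIr _)) => /eqP E1.
  by rewrite -(hsubmxK b1) -(hsubmxK b2) E1 E2.
have fCG : f @: CG G = setX (dual_code G) setT.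
  apply/setP => -[u v]; rewrite in_setX in_setT andbT; apply/imsetP/idP.
    by move=> [b bC [-> _]]; rewrite -CG_lrsum.
  move=> u_perp; exists (row_mx (u + v) v); last first.
    by rewrite /f /lrsum row_mxKl row_mxKr -addrA bv_addrr addr0.
  by rewrite CG_lrsum /lrsum row_mxKl row_mxKr -addrA bv_addrr addr0.
have dimG : (\dim G <= r)%N.
  by have := dimvS (subvf G); rewrite dimvf dim_matrix mul1r.
have card_dual : #|dual_code G| = (2 ^ (r - \dim G))%N.
  apply/eqP; rewrite -(eqn_pmul2r (expn_gt0 2 (\dim G))) -expnD subnK //.
  by rewrite -(card_dual_code G) card_vspace card_Fp.
rewrite -(card_imset _ f_inj) fCG cardsX cardsT card_mx card_Fp // mul1n card_dual.
by rewrite -expnD; congr expn; lia.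
Qed.

End CG.

Section TwistedAlgebra.
Variable r : nat.
Implicit Types a b : bv (r + r).

Lemma scaleFV (k : algC) (f : FV r) x : (k *: f) x = k * f x.
Proof. by rewrite ffunE. Qed.

Lemma eval_is_scalar x : scalar (fun f : FV r => f x).
Proof. by move=> k f1 f2; rewrite !ffunE. Qed.

Lemma ebasE a x : ebas a x = (x == a)%:R.
Proof. by rewrite ffunE. Qed.

Lemma dim_span_ebas (S : {set bv (r + r)}) :
  \dim <<[seq ebas a | a <- enum S]>> = #|S|.
Proof.
set X := [seq ebas a | a <- enum S].
have sizeX : size X = #|S| by rewrite size_map -cardE.
suff /eqP : free X by rewrite sizeX.
apply/(@freeP _ _ _ (in_tuple X)) => k Xk i.
have ltiS (j : 'I_(size X)) : (j < #|S|)%N by rewrite -sizeX.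
move/ffunP/(_ (enum S)`_i): Xk; rewrite sum_ffunE ffunE (bigD1 i) //= big1 ?addr0.
  by rewrite scaleFV (nth_map 0) -?cardE // ebasE eqxx mulr1.
move=> j ji; rewrite scaleFV (nth_map 0) -?cardE // ebasE.
by rewrite nth_uniq ?enum_uniq -?cardE // val_eqE eq_sym (negPf ji) mulr0.
Qed.

Lemma tmul_ebas a b : tmul (ebas a) (ebas b) = eps a b *: ebas (a + b).
Proof.
apply/ffunP => c; rewrite scaleFV !ffunE (bigD1 a) //= (bigD1 b) //= !ebasE !eqxx !mulr1.
rewrite big1 ?addr0 => [|b' /negPf b'b]; last by rewrite ebasE b'b mulr0 if_same.
rewrite big1 ?addr0 => [|a' /negPf a'a]; last first.
  by apply: big1 => b' _; rewrite ebasE a'a mulr0 mul0r if_same.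
by rewrite eq_sym; case: eqP; rewrite ?mulr1 ?mulr0.
Qed.

End TwistedAlgebra.

Section Cmul.
Variables (n : nat) (g : bv n).

Lemma cmul_is_linear : linear (cmul g).
Proof. by move=> a x y; apply/rowP => k; rewrite !mxE mulrDr mulrCA. Qed.
HB.instance Definition _ :=
  GRing.isLinear.Build 'F_2 (bv n) (bv n) *:%R (cmul g) cmul_is_linear.

Lemma cmul_idem x : cmul g (cmul g x) = cmul g x.
Proof.
by apply/rowP => k; rewrite !mxE; case: (F2_cases (g 0 k)) => ->; rewrite ?mul0r ?mul1r.
Qed.

End Cmul.

Section DeltaComponent.
Variables (r : nat) (G : {vspace bv r}) (g : bv r).

Definition subsupp : {set bv r} := [set h | cmul g h == h].

(* [a |-> a + Delta (cmul g (rsubmx a))] picks one point of each coset of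
   [Delta @: subsupp] in [CG G]. *)
Definition CG_transversal : {set bv (r + r)} :=
  [set a in CG G | cmul g (rsubmx a) == 0].

Local Notation H := subsupp.
Local Notation T := CG_transversal.

Lemma in_subsupp h : (h \in subsupp) = (cmul g h == h).
Proof. by rewrite inE. Qed.

Lemma in_CG_transversal a :
  (a \in CG_transversal) = (a \in CG G) && (cmul g (rsubmx a) == 0).
Proof. by rewrite inE. Qed.

Lemma Deltad_Delta : Deltad (Delta g) = (@Delta r) @: subsupp.
Proof.
apply/setP => c; rewrite inE; apply/andP/imsetP => [[/eqP gc /imsetP [h _ ch]] | [h]].
  exists h => //; rewrite inE; apply/eqP/Delta_inj.
  by rewrite -cmul_Delta -ch.
by rewrite inE => /eqP gh ->; rewrite cmul_Delta gh; split => //; apply: imset_f.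
Qed.

Lemma card_subsupp : #|subsupp| = (2 ^ hweight g)%N.
Proof.
pose supp (h : bv r) := [set i | h 0 i != 0].
have supp_inj : injective supp.
  move=> h1 h2 /setP E; apply/rowP => i; move: (E i); rewrite !inE.
  by case: (F2_cases (h1 0 i)) => ->; case: (F2_cases (h2 0 i)) => ->.
rewrite /hweight -card_powerset -(card_imset _ supp_inj); apply: eq_card => S.
rewrite inE; apply/imsetP/subsetP => [[h] | S_g].
  rewrite inE => /eqP gh -> i; rewrite !inE -gh mxE.
  by apply: contraNneq => ->; rewrite mul0r.
exists (\row_i (i \in S)%:R); last by apply/setP => i; rewrite !inE mxE; case: (i \in S).
rewrite inE; apply/eqP/rowP => i; rewrite !mxE.
case iS: (i \in S); rewrite ?mulr0 // mulr1.
by have := S_g i iS; rewrite inE => /F2_nz.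
Qed.

Lemma card_CG_transversal : (#|CG_transversal| * #|subsupp|)%N = #|CG G|.
Proof.
pose k (a : bv (r + r)) := cmul g (rsubmx a).
pose split_coset a := (a + Delta (k a), k a).
have split_inj : injective split_coset.
  by move=> a1 a2 [+ E2]; rewrite E2 => /addIr.
rewrite -cardsX -(card_imset _ split_inj); apply/esym/eq_card => -[t h].
rewrite in_setX in_CG_transversal in_subsupp.
apply/imsetP/andP => [[a aC [-> ->]] | [/andP [tC /eqP t0] /eqP gh]].
  rewrite /split_coset CG_addDelta aC /k !linearD /= rsubmx_Delta cmul_idem.
  by rewrite bv_addrr !eqxx.
have kE : k (t + Delta h) = h by rewrite /k !linearD /= rsubmx_Delta t0 add0r gh.
exists (t + Delta h); first by rewrite CG_addDelta.
by rewrite /split_coset kE -addrA bv_addrr addr0.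
Qed.

Definition relgen a h : FV r := eps a (Delta h) *: ebas (a + Delta h) - ebas a.

Lemma relspE :
  relsp G (Delta g) = <<[seq relgen a h | a <- enum (CG G), h <- enum H]>>%VS.
Proof.
apply: eq_span => x; apply/allpairsP/allpairsP => -[[a c] /= [aC + ->]].
  rewrite mem_enum Deltad_Delta => /imsetP [h hH ->].
  by exists (a, h); split; [| rewrite mem_enum | rewrite tmul_ebas /relgen].
move=> hH; exists (a, Delta c); split; [done | | by rewrite tmul_ebas /relgen].
by rewrite mem_enum Deltad_Delta; apply: imset_f; rewrite -mem_enum.
Qed.

Definition transversal_span : {vspace FV r} := <<[seq ebas t | t <- enum T]>>%VS.

Lemma ebas_in_CGalg a : a \in CG G -> ebas a \in CGalg G.
Proof. by move=> aC; apply/memv_span/map_f; rewrite mem_enum. Qed.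

Lemma relsp_sub_CGalg : (relsp G (Delta g) <= CGalg G)%VS.
Proof.
rewrite relspE; apply/span_subvP => _ /allpairsP [[a h] /= [aC _ ->]].
by rewrite mem_enum in aC; rewrite rpredB ?rpredZ ?ebas_in_CGalg ?CG_addDelta.
Qed.

Lemma transversal_span_sub_CGalg : (transversal_span <= CGalg G)%VS.
Proof.
apply/span_subvP => _ /mapP [t + ->]; rewrite mem_enum in_CG_transversal.
by case/andP => /ebas_in_CGalg.
Qed.

Lemma CGalg_sub_add : (CGalg G <= relsp G (Delta g) + transversal_span)%VS.
Proof.
apply/span_subvP => _ /mapP [b + ->]; rewrite mem_enum => bC.
set h := cmul g (rsubmx b); set t := b + Delta h.
have hH : h \in H by rewrite in_subsupp cmul_idem.
have tT : t \in T.
  by rewrite in_CG_transversal CG_addDelta bC !linearD /= rsubmx_Delta cmul_idem bv_addrr.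
have -> : ebas b = eps t (Delta h) *: (relgen t h + ebas t).
  by rewrite subrK scalerA eps_sqr scale1r -addrA bv_addrr addr0.
apply/rpredZ/memv_add; last by apply/memv_span/map_f; rewrite mem_enum.
rewrite relspE; apply/memv_span/allpairs_f; rewrite mem_enum //.
by move: tT; rewrite in_CG_transversal => /andP [].
Qed.

(* Twisted average over the coset [b + Delta H]: it kills every [relgen a h]
   because [eps] is bimultiplicative and trivial on pairs of diagonal vectors,
   while on [transversal_span] it reads off the coefficient of [ebas b]. *)
Definition coset_sum b (f : FV r) : algC :=
  \sum_(h in H) eps b (Delta h) * f (b + Delta h).

Lemma coset_sum_is_scalar b : scalar (coset_sum b).
Proof.
move=> k f1 f2; rewrite /coset_sum mulr_sumr -big_split; apply: eq_bigr => h _.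
by rewrite !ffunE mulrDr mulrCA.
Qed.

Lemma coset_sum_relgen b a h : h \in H -> coset_sum b (relgen a h) = 0.
Proof.
rewrite in_subsupp => /eqP gh; rewrite /coset_sum.
under eq_bigr do rewrite ffunE scaleFV !ffunE mulrBr.
rewrite sumrB; apply/eqP; rewrite subr_eq0; apply/eqP.
rewrite (reindex_inj (addIr h)) /=; apply: eq_big => [h' | h' _].
  by rewrite !in_subsupp linearD /= gh (inj_eq (addIr _)).
rewrite linearD /= eps_addr addrA (inj_eq (addIr _)).
case: eqP => [<- | _]; last by rewrite !mulr0.
by rewrite eps_addl eps_Delta !mulr1 -mulrA eps_sqr mulr1.
Qed.

Lemma coset_sum_relsp b f : f \in relsp G (Delta g) -> coset_sum b f = 0.
Proof.
rewrite relspE => fR.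
apply: (scalar_span_eq0 (coset_sum_is_scalar b) _ fR) => _ /allpairsP [[a h] /= [_ hH ->]].
by rewrite coset_sum_relgen // -mem_enum.
Qed.

Lemma coset_sum_transversal b f :
  b \in T -> f \in transversal_span -> coset_sum b f = f b.
Proof.
move=> bT fE.
have f_out c : c \notin T -> f c = 0.
  move=> cT; apply: (scalar_span_eq0 (eval_is_scalar c) _ fE) => _ /mapP [t tT ->].
  by rewrite ebasE; case: eqP => // ct; rewrite ct -mem_enum tT in cT.
rewrite /coset_sum (bigD1 0) ?in_subsupp ?linear0 //= eps0r addr0 mul1r.
rewrite big1 ?addr0 // => h /andP [+ h0]; rewrite in_subsupp => /eqP gh.
rewrite f_out ?mulr0 //; move: bT; rewrite !in_CG_transversal => /andP [_ /eqP gb].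
by rewrite negb_and !linearD /= rsubmx_Delta gb add0r gh h0 orbT.
Qed.

Lemma relsp_cap_transversal_span : (relsp G (Delta g) :&: transversal_span = 0)%VS.
Proof.
apply/eqP; rewrite -subv0; apply/subvP => f; rewrite memv_cap memv0 => /andP [fR fE].
apply/eqP/ffunP => b; rewrite ffunE.
have [bT | bT] := boolP (b \in T).
  by rewrite -coset_sum_transversal // coset_sum_relsp.
apply: (scalar_span_eq0 (eval_is_scalar b) _ fE) => _ /mapP [t tT ->].
by rewrite ebasE; case: eqP => // bt; rewrite bt -mem_enum tT in bT.
Qed.

Lemma dimA_Delta : dimA G (Delta g) = #|T|.
Proof.
rewrite /dimA; have -> : CGalg G = (relsp G (Delta g) + transversal_span)%VS.
  apply/eqP; rewrite eqEsubv CGalg_sub_add subv_add relsp_sub_CGalg.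
  exact: transversal_span_sub_CGalg.
by rewrite dimv_disjoint_sum ?relsp_cap_transversal_span // addKn dim_span_ebas.
Qed.

End DeltaComponent.

Theorem mainTheorem16 (r : nat) (G : {vspace 'rV['F_2]_r}) :
  (0 < r)%N -> const_mx 1 \in G ->
  (dimS G)%:R = (2 ^ (2 * r - \dim G))%N%:R * PG_half G :> rat.
Proof.
move=> _ _.
have dimA_g g :
    (dimA G (Delta g))%:R = (2 ^ (2 * r - \dim G))%N%:R / 2%:R ^+ hweight g :> rat.
  rewrite dimA_Delta -card_CG -(card_CG_transversal G g) card_subsupp natrM natrX.
  by rewrite mulfK // expf_neq0 // pnatr_eq0.
rewrite /dimS big_imset /=; last by move=> x y _ _; apply: Delta_inj.
rewrite natr_sum (eq_bigr _ (fun g _ => dimA_g g)) -mulr_sumr /PG_half; congr (_ * _).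
rewrite (eq_bigl (fun g => g \in G)) => [|g]; last by rewrite inE.
rewrite (sum_hweight G (fun k => (2%:R ^+ k)^-1)); apply: eq_bigr => k _.
by rewrite mulr_natl.
Qed.
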